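(* Let $q \equiv 1 \pmod 4$ be a prime number with $q \ge 13$, let $s$ be a generator of $\mathbb Z_q^*$, and let $a_0, a_1, \dots, a_{q-2} \in \mathbb Z_q$. Suppose that each of the sets $$\{a_0, a_4, a_8, \dots, a_{q-5}\},\ \{a_1, a_5, a_9, \dots, a_{q-4}\},\ \{a_2, a_6, a_{10}, \dots, a_{q-3}\},\ \{a_3, a_7, a_{11}, \dots, a_{q-2}\}$$ has at least two distinct elements modulo $q$. Then each of the sets $$\mathcal A_e = \left\{a_{\sigma(0)} + a_{\sigma(2)}s^2 + a_{\sigma(4)}s^4 + \cdots + a_{\sigma(q-3)}s^{q-3} \;\middle|\; \sigma \text{ a permutation of } (0, 2, 4, \dots, q-3) \right\},$$ $$\mathcal A_o = \left\{a_{\tau(1)}s + a_{\tau(3)}s^3 + a_{\tau(5)}s^5 + \cdots + a_{\tau(q-2)}s^{q-2} \;\middle|\; \tau \text{ a permutation of } (1, 3, 5, \dots, q-2) \right\}$$ (subsets of $\mathbb Z_q$) has at least $q-1$ distinct elements. *)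

From HB Require Import structures.
From mathcomp Require Import all_boot all_order all_algebra all_fingroup.
Set Implicit Arguments. Unset Strict Implicit. Unset Printing Implicit Defensive.
Import GRing.Theory.
Local Open Scope ring_scope.

Definition generator_units (q : nat) (s : 'F_q) : Prop :=
  s != 0 /\ forall x : 'F_q, x != 0 -> exists k : nat, x = s ^+ k.

Definition class_nonconstant (q : nat) (a : nat -> 'F_q) (r : nat) : Prop :=
  exists i j : nat, [/\ (i < q.-1)%N, (j < q.-1)%N, (i %% 4 = r)%N, (j %% 4 = r)%N
                      & a i != a j].

(* A_e : sigma a permutation of the even indices 0,2,...,q-3,
   written as 2*k, k < (q-1)/2. *)
Definition A_even (q : nat) (s : 'F_q) (a : nat -> 'F_q) : {set 'F_q} :=
  [set \sum_(k < q.-1./2) a (2 * sigma k)%N * s ^+ (2 * k) | sigma : 'S_(q.-1./2)].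

(* A_o : tau a permutation of the odd indices 1,3,...,q-2. *)
Definition A_odd (q : nat) (s : 'F_q) (a : nat -> 'F_q) : {set 'F_q} :=
  [set \sum_(k < q.-1./2) a (2 * tau k).+1 * s ^+ (2 * k).+1 | tau : 'S_(q.-1./2)].

From HB Require Import structures.
From mathcomp Require Import all_boot all_order all_algebra all_fingroup.
From mathcomp Require Import ring zify finfield.
Set Implicit Arguments.
Unset Strict Implicit.
Unset Printing Implicit Defensive.
Import GRing.Theory.
Local Open Scope ring_scope.

(* Write n = (q-1)/2, z = s^2 (a primitive n-th root of unity) and
   b j = a (2 j + e).  Both A_e and A_o have the form
   A = { \sum_k b (sigma k) * u * z^k | sigma in S_n }, with u = 1 or u = s.
   Rotating sigma shows A * z = A, so A \ {0} is a union of cosets of <z>,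
   each of size n: it suffices to show #|A| >= n + 2.

   That bound is a Combinatorial Nullstellensatz argument.  For distinct
   x_0, ..., x_(k-1), the sums \sum_i c_i x_(pi i) (pi in S_k) take more than
   P = #{ j < i < k | c_j != c_i } values, provided m! != 0 for m <= max(k, P).
   Otherwise a polynomial R of degree P vanishes at all of them, and the grid
   sum of det(y_i^j) R(\sum_i c_i y_i) against Lagrange weights is 0 (the
   determinant kills non-permutations); but the coefficient formula evaluates
   it to P! times a confluent Vandermonde determinant in the c_i, which is
   nonzero.  The hypothesis on the four classes gives P >= n + 1 for the whole
   sequence b, and a prefix of length k with n + 1 <= P <= 2 n < q does the
   job. *)

Section LagrangeWeights.
Variable F : fieldType.

Definition lagrange_weight (G : seq F) (y : F) : F :=
  (\prod_(f <- G | f != y) (y - f))^-1.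

(* ['X^e] is the Lagrange interpolant of its values on [G]; compare the
   coefficients of ['X^(size G).-1] on both sides. *)
Lemma sum_lagrange_weight_expr (G : seq F) (e : nat) :
  uniq G -> (e < size G)%N ->
  \sum_(y <- G) lagrange_weight G y * y ^+ e = (e == (size G).-1)%:R.
Proof.
move=> uG ltG.
pose l y := \prod_(f <- G | f != y) ('X - f%:P).
pose L := \sum_(y <- G) (lagrange_weight G y * y ^+ e) *: l y.
have size_l y : y \in G -> size (l y) = size G.
  move=> yG; rewrite /l -big_filter size_prod_XsubC size_filter.
  have := count_predC (pred1 y) G; rewrite count_uniq_mem // yG.
  by case: (size G) => [|m] //= <-; rewrite add1n.
have denom_neq0 y : y \in G -> \prod_(f <- G | f != y) (y - f) != 0.
  move=> yG; rewrite prodf_seq_eq0; apply/hasPn => f fG /=.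
  by apply/negP => /andP[fy]; rewrite subr_eq0 eq_sym (negPf fy).
have l_at y z : y \in G -> z \in G ->
    (l y).[z] = if z == y then (lagrange_weight G y)^-1 else 0.
  move=> yG zG; rewrite /l horner_prod.
  under eq_bigr do rewrite hornerXsubC.
  case: eqP => [->|zy]; first by rewrite invrK.
  apply/eqP; rewrite prodf_seq_eq0; apply/hasP; exists z => //=.
  by rewrite subrr eqxx andbT; apply/eqP.
have LE : L = 'X^e.
  apply/eqP; rewrite -subr_eq0; apply/negPn/negP => nz.
  have := max_poly_roots nz _ uG.
  have -> : all (root (L - 'X^e)) G.
    apply/allP => z zG; rewrite /root hornerD hornerN hornerXn /L horner_sum.
    rewrite (bigD1_seq z) //= hornerZ l_at // eqxx mulrAC mulfV ?mul1r;
      last by rewrite invr_neq0 ?denom_neq0.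
    rewrite big1_seq ?addr0 ?subrr // => y /andP[yz yG].
    by rewrite hornerZ l_at // eq_sym (negPf yz) mulr0.
  move=> /(_ isT); apply/negP; rewrite -leqNgt.
  apply: leq_trans (size_polyD _ _) _; rewrite size_polyN geq_max size_polyXn ltG andbT.
  apply: leq_trans (size_sum _ _ _) _; apply/bigmax_leqP_seq => y yG _.
  by apply: leq_trans (size_scale_leq _ _) _; rewrite size_l.
rewrite eq_sym; have := congr1 (fun p : {poly F} => p`_(size G).-1) LE.
rewrite coefXn /L coef_sum /= => <-.
apply: eq_big_seq => y yG; rewrite coefZ.
have /monicP : l y \is monic by rewrite /l -big_filter monic_prod_XsubC.
by rewrite lead_coefE size_l // => ->; rewrite mulr1.
Qed.

End LagrangeWeights.

Section Multiplicity.
Variable F : fieldType.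

Lemma nderivn_root_dvdp (p : {poly F}) (a : F) (m : nat) :
  (forall l, (l < m)%N -> (p^`N(l)).[a] = 0) -> ('X - a%:P) ^+ m %| p.
Proof.
elim: m p => [|m IH] p vanish; first by rewrite expr0 dvd1p.
have : root p a by rewrite /root -[p]nderivn0 vanish.
case/factor_theorem => r pE; subst p; rewrite exprSr dvdp_mul2r ?polyXsubC_eq0 //.
apply: IH => l ltl; have := vanish l.+1 ltl.
have -> : r * ('X - a%:P) = (r * 'X + 0%:P) - a *: r.
  by rewrite polyC0 addr0 mulrBr -mul_polyC (mulrC a%:P).
by rewrite nderivnB nderivnMXaddC nderivnZ !hornerE mulrC addrK.
Qed.

Lemma sum_mup_lt_size (s : seq F) (p : {poly F}) :
  p != 0 -> uniq s -> (\sum_(a <- s) mup a p < size p)%N.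
Proof.
elim: s p => [|a s IH] p pnz /=; first by rewrite big_nil size_poly_gt0.
case/andP => aNs us; rewrite big_cons.
have : ('X - a%:P) ^+ mup a p %| p by rewrite -mup_geq.
case/dvdpP => r pE.
have rnz : r != 0 by apply: contraNneq pnz => r0; rewrite pE r0 mul0r.
have Enz : ('X - a%:P) ^+ mup a p != 0 by rewrite expf_neq0 ?polyXsubC_eq0.
have -> : (\sum_(b <- s) mup b p = \sum_(b <- s) mup b r)%N.
  apply: eq_big_seq => b bs; rewrite pE mupMl //.
  rewrite /root horner_exp hornerXsubC expf_neq0 // subr_eq0.
  by apply: contraNneq aNs => <-.
have := IH r rnz us; rewrite [in size p]pE size_mul // size_exp_XsubC addnS /=.
by rewrite addnC ltn_add2r.
Qed.

End Multiplicity.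

Section Counting.
Variable T : eqType.

Definition prev_count (c : nat -> T) (i : nat) : nat :=
  count_mem (c i) [seq c j | j <- iota 0 i].

Lemma prev_count_le (c : nat -> T) i : (prev_count c i <= i)%N.
Proof. by rewrite (leq_trans (count_size _ _)) // size_map size_iota. Qed.

Lemma prev_countP (c : nat -> T) k a l :
  (l < count_mem a [seq c j | j <- iota 0 k])%N ->
  exists2 i, (i < k)%N & c i = a /\ prev_count c i = l.
Proof.
elim: k l => [|k IH] l //.
have -> : iota 0 k.+1 = iota 0 k ++ [:: k] by rewrite -addn1 iotaD.
rewrite map_cat count_cat /= addn0.
have [lt_l _ | le_l] := ltnP l (count_mem a [seq c j | j <- iota 0 k]).
  by have [i ik ci] := IH l lt_l; exists i => //; rewrite ltnS ltnW.
case: (c k =P a) => [cka | _]; last by rewrite addn0 ltnNge le_l.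
rewrite addn1 ltnS => ge_l; exists k; rewrite ?addn1 //; split=> //.
by apply/eqP; rewrite eqn_leq /prev_count cka ge_l le_l.
Qed.

Definition distinct_pairs (c : nat -> T) k : nat :=
  \sum_(i < k) \sum_(j < i) (c j != c i).

Lemma subn_prev_count (c : nat -> T) i :
  (i - prev_count c i = \sum_(j < i) (c j != c i))%N.
Proof.
rewrite /prev_count count_map -[i in (i - _)%N](size_iota 0 i).
rewrite -(count_predC (preim c (pred1 (c i)))) addKn -sum1_count big_mkcond /=.
have -> : iota 0 i = index_iota 0 i by rewrite /index_iota subn0.
by rewrite big_mkord; apply: eq_bigr => j _; case: eqP.
Qed.

Lemma sum_prev_count (c : nat -> T) k :
  (\sum_(i < k) (k.-1 - prev_count c i) = \sum_(i < k) i + distinct_pairs c k)%N.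
Proof.
have -> : (\sum_(i < k) i = \sum_(i < k) (k.-1 - i))%N.
  rewrite -(big_mkord xpredT (fun i => i)) big_rev_mkord subn0; apply: eq_bigr => i _.
  by move: (ltn_ord i); lia.
rewrite -big_split /=; apply: eq_bigr => i _; rewrite -subn_prev_count.
by move: (ltn_ord i) (prev_count_le c i); lia.
Qed.

Lemma double_distinct_pairs (c : nat -> T) n :
  (distinct_pairs c n).*2 = (\sum_(i < n) \sum_(j < n) (c j != c i))%N.
Proof.
have -> : distinct_pairs c n = (\sum_(i < n) \sum_(j < n) ((j < i) && (c j != c i)))%N.
  apply: eq_bigr => i _.
  rewrite (big_ord_widen n (fun j => (c j != c i) : nat) (ltnW (ltn_ord i))).
  by rewrite big_mkcond /=; apply: eq_bigr => j _; case: (j < i)%N.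
rewrite -addnn {2}exchange_big -big_split /=; apply: eq_bigr => i _.
rewrite -big_split /=; apply: eq_bigr => j _.
case: (ltngtP j i) => [||/val_inj ->] /=; rewrite ?addn0 ?add0n ?eqxx // eq_sym //.
Qed.

(* With D i = #{j < n | c j != c i}, 2 P = \sum_i D i where every D i >= 2
   and D i0 + D j0 >= n; hence 2 P >= 3 n - 4. *)
Lemma distinct_pairs_lower (c : nat -> T) n : (6 <= n)%N ->
  (forall i, (i < n)%N -> exists j1 j2,
      [/\ (j1 < n)%N, (j2 < n)%N, j1 != j2, c j1 != c i & c j2 != c i]) ->
  (exists i0 j0, [/\ (i0 < n)%N, (j0 < n)%N & c i0 != c j0]) ->
  (n.+1 <= distinct_pairs c n)%N.
Proof.
move=> n6 two_others [i0 [j0 [i0n j0n c_ij]]].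
pose D (i : 'I_n) := (\sum_(j < n) (c j != c i))%N.
have sum_pair (f : 'I_n -> nat) i j : i != j -> (f i + f j <= \sum_(l < n) f l)%N.
  by move=> ij; rewrite (bigD1 i) //= (bigD1 j) 1?eq_sym //= addnA leq_addr.
have D_ge2 i : (2 <= D i)%N.
  have [j1 [j2 [j1n j2n j12 c1 c2]]] := two_others i (ltn_ord i).
  have := @sum_pair (fun j : 'I_n => (c j != c i) : nat) (Ordinal j1n) (Ordinal j2n) j12.
  by rewrite /= c1 c2.
have D_ij : (n <= D (Ordinal i0n) + D (Ordinal j0n))%N.
  rewrite /D -big_split /= -[X in (X <= _)%N]card_ord -sum1_card leq_sum // => j _.
  by case: (c j =P c i0) => [->|] //=; rewrite c_ij.
have ij : Ordinal i0n != Ordinal j0n by apply: contra c_ij => /eqP [->].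
have := @sum_pair (fun i => D i - 2)%N _ _ ij.
have : (\sum_(i < n) (D i - 2) + 2 * n = \sum_(i < n) D i)%N.
  rewrite mulnC -[X in (_ + X * _)%N]card_ord -sum_nat_const -big_split /=.
  by apply: eq_bigr => i _; rewrite subnK.
move: (double_distinct_pairs c n) (D_ge2 (Ordinal i0n)) (D_ge2 (Ordinal j0n)) D_ij.
rewrite -/(\sum_(i < n) D i)%N; lia.
Qed.

Lemma distinct_pairs_window (c : nat -> T) n : (n.+1 <= distinct_pairs c n)%N ->
  exists2 k, (k <= n)%N & (n.+1 <= distinct_pairs c k <= n.*2)%N.
Proof.
move=> le_n.
have [k le_k min_k] := @ex_minnP (fun k => n < distinct_pairs c k)%N (ex_intro _ n le_n).
exists k; first exact: min_k.
rewrite le_k /=; case: k le_k min_k => [|k] le_k min_k.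
  by rewrite /distinct_pairs big_ord0.
have lt_kn : (k < n)%N by apply: min_k.
have le_k' : (distinct_pairs c k <= n)%N by rewrite leqNgt; apply/negP => /min_k; rewrite ltnn.
rewrite /distinct_pairs big_ord_recr /= -addnn; apply: leq_add => //.
apply: leq_trans (ltnW lt_kn); rewrite -[X in (_ <= X)%N]card_ord -sum1_card.
by apply: leq_sum => j _; apply: leq_b1.
Qed.

Lemma parity_two_others (b : nat -> T) n :
  (forall p : bool, exists j1 j2,
      [/\ (j1 < n)%N, (j2 < n)%N, (j1 %% 2 = p)%N, (j2 %% 2 = p)%N & b j1 != b j2]) ->
  forall i, (i < n)%N -> exists j1 j2,
    [/\ (j1 < n)%N, (j2 < n)%N, j1 != j2, b j1 != b i & b j2 != b i].
Proof.
move=> nonconst i _.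
have other (p : bool) : exists j, [/\ (j < n)%N, (j %% 2 = p)%N & b j != b i].
  have [j1 [j2 [j1n j2n p1 p2 b12]]] := nonconst p.
  case: (b j1 =P b i) => [b1 | /eqP b1]; last by exists j1.
  by exists j2; rewrite -b1 eq_sym.
have [[j1 [j1n p1 b1]] [j2 [j2n p2 b2]]] := (other false, other true).
exists j1, j2; split=> //; apply/eqP => eq_j; by rewrite eq_j p2 in p1.
Qed.

End Counting.

Section DividedPowers.
Variable F : fieldType.

Definition divpow (m : nat) (a : F) : F := a ^+ m / m`!%:R.

Definition divpow_mx k (t g : nat -> nat) (c : nat -> F) : 'M[F]_k :=
  \matrix_(i < k, j < k) if (g j <= t i)%N then divpow (t i - g j) (c i) else 0.

Lemma divpow_mx_minor k (t g : nat -> nat) (c : nat -> F) (j : 'I_k.+1) :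
  row' ord_max (col' j (divpow_mx k.+1 t g c)) =
  divpow_mx k t (fun j' => g (bump j j')) c.
Proof. by apply/matrixP => i j'; rewrite !mxE /= /bump [(k <= i)%N]leqNgt ltn_ord. Qed.

Lemma det_divpow_mx_eq0 k (t g : nat -> nat) (c : nat -> F) :
  (\sum_(i < k) t i < \sum_(j < k) g j)%N -> \det (divpow_mx k t g c) = 0.
Proof.
elim: k g => [|k IH] g; first by rewrite !big_ord0.
move=> lt_tg; rewrite (expand_det_row _ ord_max) big1 // => j _.
rewrite /cofactor divpow_mx_minor mxE /=.
case: leqP => le_gt; last by rewrite mul0r.
rewrite IH ?mulr0 ?mul0r //.
move: lt_tg; rewrite big_ord_recr (bigD1_ord j) //=.
by move: (\sum_(i < k) t i) (\sum_(j' < k) g (bump j j')) le_gt; lia.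
Qed.

Lemma size_gt_nderivn_prev_count (p : {poly F}) (c : nat -> F) k :
  p != 0 -> (forall i, (i < k)%N -> (p^`N(prev_count c i)).[c i] = 0) ->
  (k < size p)%N.
Proof.
move=> pnz vanish; set s := [seq c j | j <- iota 0 k].
have count_le_mup a : (count_mem a s <= mup a p)%N.
  rewrite mup_geq //; apply: nderivn_root_dvdp => l /prev_countP[i ik [<- <-]].
  exact: vanish.
have := sum_mup_lt_size pnz (undup_uniq s); apply: leq_trans.
have <- : (\sum_(a <- undup s) count_mem a s)%N = k.
  rewrite -(size_iota 0 k) -(size_map c) -(perm_size (perm_count_undup s)).
  rewrite size_flatten /shape -map_comp sumnE big_map.
  by apply: eq_bigr => a _ /=; rewrite size_nseq.
by rewrite ltnS; apply: leq_sum => a _; apply: count_le_mup.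
Qed.

Lemma horner_nderivn_divpow_sum k (v : 'I_k -> F) (l : nat) (a : F) :
  (forall m, (m < k)%N -> (m`!)%:R != 0 :> F) -> (l < k)%N ->
  ((\sum_(j < k) (v j / (k.-1 - j)`!%:R) *: 'X^(k.-1 - j))^`N(l)).[a] =
  (l`!%:R)^-1 *
    \sum_(j < k) v j * (if (j <= k.-1 - l)%N then divpow (k.-1 - l - j) a else 0).
Proof.
move=> fact_neq0 lk.
rewrite raddf_sum horner_sum mulr_sumr; apply: eq_bigr => j _ /=.
rewrite nderivnZ nderivnXn hornerZ hornerMn hornerXn.
have jk := ltn_ord j; case: leqP => jl; last first.
  by rewrite bin_small ?mulr0n ?mulr0 //; move: jl lk; lia.
have lj : (l <= k.-1 - j)%N by move: jl lk; lia.
have : 'C(k.-1 - j, l)%:R * (l`!%:R * (k.-1 - j - l)`!%:R) != 0 :> F.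
  by rewrite -!natrM bin_fact ?fact_neq0 //; lia.
rewrite !mulf_eq0 !negb_or => /and3P[nzC nzl nzr].
rewrite /divpow -(bin_fact lj) !natrM -mulr_natr (subnAC _ l j); field.
by rewrite nzC nzl nzr.
Qed.

(* A confluent Vandermonde determinant: a kernel vector would give a nonzero
   polynomial of degree < k vanishing at each value of c to the order of its
   multiplicity among c 0, ..., c k.-1. *)
Lemma det_divpow_mx_neq0 (c : nat -> F) k :
  (forall m, (m < k)%N -> (m`!)%:R != 0 :> F) ->
  \det (divpow_mx k (fun i => k.-1 - prev_count c i)%N id c) != 0.
Proof.
move=> fact_neq0; apply/negP => /eqP det0.
have /det0P[v vnz vB] : \det (divpow_mx k (fun i => k.-1 - prev_count c i)%N id c)^T == 0.
  by rewrite det_tr det0.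
pose p : {poly F} := \sum_(j < k) (v 0 j / (k.-1 - j)`!%:R) *: 'X^(k.-1 - j).
have size_p : (size p <= k)%N.
  apply: leq_trans (size_sum _ _ _) _; apply/bigmax_leqP => j _.
  apply: leq_trans (size_scale_leq _ _) _; rewrite size_polyXn.
  by move: (ltn_ord j); lia.
have coef_p (j : 'I_k) : p`_(k.-1 - j) = v 0 j / (k.-1 - j)`!%:R.
  rewrite coef_sum (bigD1 j) //= big1 ?addr0 => [|j' j'j].
    by rewrite coefZ coefXn eqxx mulr1.
  rewrite coefZ coefXn (_ : (k.-1 - j == k.-1 - j')%N = false) ?mulr0 //.
  apply/negbTE; apply: contra j'j => /eqP eq_j; apply/eqP/val_inj => /=.
  by move: eq_j (ltn_ord j) (ltn_ord j'); lia.
have pnz : p != 0.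
  apply: contra vnz => /eqP p0; apply/eqP/rowP => j; rewrite mxE.
  have /eqP := coef_p j; rewrite p0 coef0 eq_sym mulf_eq0 invr_eq0.
  by rewrite (negPf (fact_neq0 _ _)) ?orbF => [/eqP|]; last by move: (ltn_ord j); lia.
have : (k < size p)%N; last by rewrite ltnNge size_p.
apply: (@size_gt_nderivn_prev_count p c k pnz) => i ik.
rewrite /p (@horner_nderivn_divpow_sum k (v 0) _ _ fact_neq0); last first.
  by move: (prev_count_le c i) ik; lia.
have := congr1 (fun M : 'M[F]_(1, k) => M 0 (Ordinal ik)) vB; rewrite !mxE => row0.
rewrite -[RHS](mulr0 (prev_count c i)`!%:R^-1) -[in RHS]row0.
by congr (_ * _); apply: eq_bigr => j _; rewrite !mxE.
Qed.

End DividedPowers.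

Section GridSums.
Variable F : fieldType.

Fixpoint grid_sum (G : nat -> seq F) (k : nat) (h : (nat -> F) -> F) : F :=
  if k is k'.+1 then
    \sum_(y <- G k') grid_sum G k' (fun x => h [eta x with k' |-> y])
  else h (fun _ => 0).

Lemma grid_sumS (G : nat -> seq F) k (h : (nat -> F) -> F) :
  grid_sum G k.+1 h =
  \sum_(y <- G k) grid_sum G k (fun x => h [eta x with k |-> y]).
Proof. by []. Qed.

Lemma eq_grid_sum (G : nat -> seq F) k (h1 h2 : (nat -> F) -> F) :
  (forall x, (forall i, (i < k)%N -> x i \in G i) -> h1 x = h2 x) ->
  grid_sum G k h1 = grid_sum G k h2.
Proof.
elim: k h1 h2 => [|k IH] h1 h2 eq_h /=; first exact: eq_h.
apply: eq_big_seq => y yG; apply: IH => x xG; apply: eq_h => i.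
by rewrite ltnS leq_eqVlt /=; case: eqP => [->|_] //; apply: xG.
Qed.

Lemma grid_sum0 (G : nat -> seq F) k : grid_sum G k (fun _ => 0) = 0.
Proof. by elim: k => //= k IH; rewrite big1. Qed.

Lemma grid_sumMl (G : nat -> seq F) k (a : F) (h : (nat -> F) -> F) :
  grid_sum G k (fun x => a * h x) = a * grid_sum G k h.
Proof.
elim: k h => [|k IH] h //=; rewrite mulr_sumr; apply: eq_bigr => y _.
exact: IH.
Qed.

Lemma grid_sum_sum (G : nat -> seq F) k (I : Type) (r : seq I)
    (h : I -> (nat -> F) -> F) :
  grid_sum G k (fun x => \sum_(j <- r) h j x) = \sum_(j <- r) grid_sum G k (h j).
Proof.
elim: k h => [|k IH] h //=.
rewrite exchange_big /=; apply: eq_bigr => y _.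
exact: (IH (fun j x => h j [eta x with k |-> y])).
Qed.

End GridSums.

Section CoefficientFormula.
Variable F : fieldType.

Definition vdm_mx k (x : nat -> F) (g : nat -> nat) : 'M[F]_k :=
  \matrix_(i < k, j < k) x i ^+ g j.

Definition vdm_lin_term (w : nat -> F -> F) (c : nat -> F) k (g : nat -> nat) d
    (x : nat -> F) : F :=
  (\prod_(i < k) w i (x i)) * \det (vdm_mx k x g) * (\sum_(i < k) c i * x i) ^+ d.

Lemma vdm_lin_term_expand (w : nat -> F -> F) (c : nat -> F) k (g : nat -> nat) d
    (x : nat -> F) (y : F) :
  vdm_lin_term w c k.+1 g d [eta x with k |-> y] =
  \sum_(j < k.+1) \sum_(a < d.+1)
    (-1) ^+ (k + j) * ('C(d, a)%:R * c k ^+ a * (w k y * y ^+ (g j + a))) *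
    vdm_lin_term w c k (fun j' => g (bump j j')) (d - a)%N x.
Proof.
rewrite /vdm_lin_term [X in X * _ * _ = _]big_ord_recr.
rewrite [X in _ * X ^+ d = _]big_ord_recr /= eqxx.
under [\prod_(i < k) _]eq_bigr => i _ do rewrite ltn_eqF //.
under [\sum_(i < k) _]eq_bigr => i _ do rewrite ltn_eqF //.
rewrite (expand_det_row _ ord_max) exprDn -mulrA big_distrlr mulr_sumr.
apply: eq_bigr => j _; rewrite mulr_sumr; apply: eq_bigr => a _; rewrite /cofactor.
have -> : row' ord_max (col' j (vdm_mx k.+1 [eta x with k |-> y] g)) =
    vdm_mx k x (fun j' => g (bump j j')).
  apply/matrixP => i j'; rewrite !mxE /= /bump [(k <= i)%N]leqNgt ltn_ord add0n.
  by rewrite ltn_eqF.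
have -> : vdm_mx k.+1 [eta x with k |-> y] g ord_max j = y ^+ g j.
  by rewrite mxE /= eqxx.
rewrite exprD exprMn -mulr_natr !exprD /=; ring.
Qed.

Lemma grid_sum_vdm_lin_term_expand (G : nat -> seq F) (w : nat -> F -> F)
    (c : nat -> F) k (g : nat -> nat) d :
  grid_sum G k.+1 (vdm_lin_term w c k.+1 g d) =
  \sum_(j < k.+1) (-1) ^+ (k + j) * \sum_(a < d.+1)
    'C(d, a)%:R * c k ^+ a * (\sum_(y <- G k) w k y * y ^+ (g j + a)) *
    grid_sum G k (vdm_lin_term w c k (fun j' => g (bump j j')) (d - a)%N).
Proof.
transitivity (\sum_(y <- G k) \sum_(j < k.+1) \sum_(a < d.+1)
    (-1) ^+ (k + j) * ('C(d, a)%:R * c k ^+ a * (w k y * y ^+ (g j + a))) *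
    grid_sum G k (vdm_lin_term w c k (fun j' => g (bump j j')) (d - a)%N)).
  rewrite grid_sumS; apply: eq_bigr => y _.
  rewrite (eq_grid_sum (h2 := fun x => \sum_(j < k.+1) \sum_(a < d.+1)
    (-1) ^+ (k + j) * ('C(d, a)%:R * c k ^+ a * (w k y * y ^+ (g j + a))) *
    vdm_lin_term w c k (fun j' => g (bump j j')) (d - a)%N x)); last first.
    by move=> x _; apply: vdm_lin_term_expand.
  rewrite grid_sum_sum; apply: eq_bigr => j _.
  by rewrite grid_sum_sum; apply: eq_bigr => a _; rewrite grid_sumMl.
rewrite exchange_big; apply: eq_bigr => j _; rewrite exchange_big mulr_sumr.
apply: eq_bigr => a _; rewrite -mulr_suml -mulr_sumr -mulr_sumr; ring.
Qed.

(* The one-variable step of the coefficient formula: of the binomial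
   expansion only the term [a = t - g] survives. *)
Lemma sum_binomial_collapse (t g A B d : nat) (x delta : F) (Y D : nat -> F) :
  (forall e, (e <= t)%N -> Y e = (e == t)%:R) ->
  (forall m, (A + m <= B)%N -> D m = (A + m == B)%:R * m`!%:R * delta) ->
  ((B < A)%N -> delta = 0) ->
  ((g <= t)%N -> (t - g)`!%:R != 0 :> F) ->
  (g + A + d <= t + B)%N ->
  \sum_(a < d.+1) 'C(d, a)%:R * x ^+ a * Y (g + a)%N * D (d - a)%N =
  (if (g <= t)%N then divpow (t - g) x else 0) *
    ((g + A + d == t + B)%:R * d`!%:R * delta).
Proof.
move=> Y_E D_E delta0 fact_neq0 le_d.
have D0 a : (a <= d)%N -> (t < g + a)%N -> D (d - a)%N = 0.
  move=> le_a lt_a; rewrite D_E; last by lia.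
  by rewrite (_ : (_ == _) = false) ?mul0r //; apply/negbTE/eqP; lia.
have Y0 a : (g + a <= t)%N -> g + a != t -> Y (g + a)%N = 0.
  by move=> le_a /negPf; rewrite Y_E // => ->.
case: (leqP g t) => [le_gt | lt_tg]; last first.
  rewrite mul0r big1 // => a _; rewrite D0 ?mulr0 //; last by lia.
  by rewrite -ltnS ltn_ord.
set a0 := (t - g)%N.
case: (leqP a0 d) => [le_a0 | lt_a0].
  rewrite (bigD1 (Ordinal (leq_ltn_trans le_a0 (ltnSn d)))) //= big1 ?addr0; last first.
    move=> a ne_a; have le_a : (a <= d)%N by rewrite -ltnS ltn_ord.
    have ne_a' : (a : nat) != a0 by apply: contra ne_a => /eqP eq_a; apply/eqP/val_inj.
    case: (leqP (g + a) t) => [le_ga | lt_ga]; first by rewrite Y0 ?mulr0 ?mul0r //; lia.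
    by rewrite D0 ?mulr0.
  rewrite Y_E ?D_E; [|lia|lia].
  rewrite (_ : g + a0 == t = true); last by apply/eqP; lia.
  rewrite (_ : (A + (d - a0)%N == B) = (g + A + d == t + B)); last by apply/eqP/eqP; lia.
  have := fact_neq0 le_gt; rewrite -/a0 => nz_a0.
  by rewrite /divpow -(bin_fact le_a0) !natrM mulr1; field.
rewrite big1 => [|a _]; last first.
  by rewrite Y0 ?mulr0 ?mul0r //; move: (ltn_ord a); lia.
case: eqP => [eq_d | _]; last by rewrite !mul0r mulr0.
by rewrite delta0 ?mulr0 //; lia.
Qed.

(* The coefficient formula of the Combinatorial Nullstellensatz for
   det(x_i^(g j)) (\sum_i c_i x_i)^d: weights with these moments extract the
   coefficient of \prod_i x_i^(t i). *)
Lemma grid_sum_vdm_lin_term (G : nat -> seq F) (w : nat -> F -> F) (t : nat -> nat)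
    (c : nat -> F) :
  (forall i e, (e <= t i)%N -> \sum_(y <- G i) w i y * y ^+ e = (e == t i)%:R) ->
  (forall i m, (m <= t i)%N -> (m`!)%:R != 0 :> F) ->
  forall k (g : nat -> nat) d, (\sum_(j < k) g j + d <= \sum_(i < k) t i)%N ->
  grid_sum G k (vdm_lin_term w c k g d) =
  (\sum_(j < k) g j + d == \sum_(i < k) t i)%:R * d`!%:R * \det (divpow_mx k t g c).
Proof.
move=> w_E fact_neq0; elim=> [|k IH] g d.
  rewrite !big_ord0 add0n leqn0 => /eqP ->.
  by rewrite /vdm_lin_term /= !big_ord0 !det_mx00 expr0 !mulr1.
move=> le_d.
rewrite grid_sum_vdm_lin_term_expand (expand_det_row _ ord_max) mulr_sumr.
apply: eq_bigr => j _; rewrite /cofactor divpow_mx_minor mxE /=.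
move: le_d; rewrite (bigD1_ord j) // big_ord_recr /= => le_d.
rewrite (@sum_binomial_collapse (t k) (g j) (\sum_(i < k) g (bump j i))%N
  (\sum_(i < k) t i)%N d (c k) (\det (divpow_mx k t (fun j' => g (bump j j')) c))
  (fun e => \sum_(y <- G k) w k y * y ^+ e)
  (fun m => grid_sum G k (vdm_lin_term w c k (fun j' => g (bump j j')) m))); first last.
- by rewrite [(t k + _)%N]addnC.
- by move=> _; apply: (fact_neq0 k); rewrite leq_subr.
- by move=> lt_BA; apply: det_divpow_mx_eq0.
- by move=> m le_m; rewrite IH.
- exact: w_E.
by rewrite [(_ + t k)%N]addnC; ring.
Qed.

End CoefficientFormula.

Section PermutationSums.
Variable F : fieldType.

Lemma vdm_mx_det_neq0_perm k (x y : nat -> F) :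
  (forall i, (i < k)%N -> y i \in [seq x j | j <- iota 0 k]) ->
  \det (vdm_mx k y id) != 0 -> exists s : 'S_k, forall i : 'I_k, y i = x (s i).
Proof.
move=> yx det_neq0.
have y_inj (i j : 'I_k) : y i = y j -> i = j.
  move=> yij; apply/eqP; apply: contraTT det_neq0 => ij.
  by rewrite negbK (determinant_alternate ij) // => l; rewrite !mxE yij.
have idx_lt (i : 'I_k) : (index (y i) [seq x j | j <- iota 0 k] < k)%N.
  by rewrite -[X in (_ < X)%N](size_iota 0 k) -(size_map x) index_mem yx.
pose f i := Ordinal (idx_lt i).
have fE i : x (f i) = y i.
  rewrite -[RHS](nth_index (x 0%N) (yx i (ltn_ord i))) (nth_map 0%N) ?size_iota //.
  by rewrite nth_iota.
have f_inj : injective f by move=> i j /(congr1 (x \o val)); rewrite /= !fE => /y_inj.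
by exists (perm f_inj) => i; rewrite permE fE.
Qed.

Lemma size_perm_sums_gt k (x c : nat -> F) (T : F) (X : seq F) :
  (forall i j, (i < k)%N -> (j < k)%N -> x i = x j -> i = j) ->
  (forall m, (m <= maxn k (distinct_pairs c k))%N -> (m`!)%:R != 0 :> F) ->
  (forall s : 'S_k, T + \sum_(i < k) c i * x (s i) \in X) ->
  (distinct_pairs c k < size X)%N.
Proof.
case: k => [|k] x_inj fact_neq0 sumsX.
  by rewrite /distinct_pairs big_ord0; case: X sumsX => // /(_ 1%g).
rewrite ltnNge; apply/negP => le_X.
set P := distinct_pairs c k.+1 in fact_neq0 le_X *.
pose t i := (k - prev_count c i)%N.
pose G i := [seq x j | j <- iota 0 (t i).+1].
pose w i := lagrange_weight (G i).
have w_E i e : (e <= t i)%N -> \sum_(y <- G i) w i y * y ^+ e = (e == t i)%:R.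
  move=> le_e; rewrite sum_lagrange_weight_expr ?size_map ?size_iota //.
  rewrite map_inj_in_uniq ?iota_uniq // => i1 i2; rewrite !mem_iota !add0n => lt1 lt2.
  by apply: x_inj; move: lt1 lt2; rewrite /t; lia.
have fact_t i m : (m <= t i)%N -> (m`!)%:R != 0 :> F.
  by move=> le_m; apply: fact_neq0; move: le_m; rewrite /t; lia.
(* The padding roots make the degree of R exactly P. *)
pose R := \prod_(z <- [seq z - T | z <- X] ++ nseq (P - size X) 0) ('X - z%:P).
have R_monic : R \is monic by rewrite monic_prod_XsubC.
have size_R : size R = P.+1.
  by rewrite size_prod_XsubC size_cat size_map size_nseq subnKC.
have R_root (s : 'S_k.+1) : R.[\sum_(i < k.+1) c i * x (s i)] = 0.
  rewrite horner_prod; apply/eqP; rewrite prodf_seq_eq0; apply/hasP.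
  exists (\sum_(i < k.+1) c i * x (s i)); last by rewrite /= hornerXsubC subrr.
  rewrite mem_cat; apply/orP; left; apply/mapP.
  by exists (T + \sum_(i < k.+1) c i * x (s i)); rewrite ?sumsX // addrAC subrr add0r.
pose h y := \sum_(d < P.+1) R`_d * vdm_lin_term w c k.+1 id d y.
have h_grid0 : grid_sum G k.+1 h = 0.
  rewrite -(grid_sum0 G k.+1); apply: eq_grid_sum => y yG.
  have -> : h y = (\prod_(i < k.+1) w i (y i)) * \det (vdm_mx k.+1 y id) *
      R.[\sum_(i < k.+1) c i * y i].
    rewrite /h horner_coef size_R mulr_sumr; apply: eq_bigr => d _.
    by rewrite /vdm_lin_term; ring.
  have [det0 | det_neq0] := eqVneq (\det (vdm_mx k.+1 y id)) 0.
    by rewrite det0 mulr0 mul0r.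
  have [i ik|s ys] := vdm_mx_det_neq0_perm (x := x) _ det_neq0.
    have /mapP[j jt ->] := yG i ik; rewrite map_f // mem_iota /=.
    by move: jt; rewrite mem_iota /t; lia.
  have -> : \sum_(i < k.+1) c i * y i = \sum_(i < k.+1) c i * x (s i).
    by apply: eq_bigr => i _; rewrite ys.
  by rewrite R_root mulr0.
have h_grid : grid_sum G k.+1 h = P`!%:R * \det (divpow_mx k.+1 t id c).
  have sum_t : (\sum_(i < k.+1) t i = \sum_(i < k.+1) i + P)%N by apply: sum_prev_count.
  rewrite /h grid_sum_sum big_ord_recr big1 => [|d _]; last first.
    rewrite grid_sumMl (grid_sum_vdm_lin_term c w_E fact_t); last first.
      by rewrite sum_t leq_add2l /= ltnW.
    by rewrite sum_t eqn_add2l /= ltn_eqF // !mul0r mulr0.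
  rewrite Monoid.simpm grid_sumMl (grid_sum_vdm_lin_term c w_E fact_t) sum_t /= ?eqxx //.
  by move/monicP: R_monic; rewrite lead_coefE size_R => ->; rewrite !mul1r.
have : P`!%:R * \det (divpow_mx k.+1 t id c) != 0.
  rewrite mulf_neq0 ?fact_neq0 ?leq_maxr // det_divpow_mx_neq0 // => m lt_m.
  by rewrite fact_neq0 // leq_max ltnW.
by rewrite -h_grid h_grid0 eqxx.
Qed.

End PermutationSums.

Lemma perm_extend n k (le_kn : (k <= n)%N) (r : 'S_k) :
  exists2 s : 'S_n,
    forall i : 'I_k, s (widen_ord le_kn i) = widen_ord le_kn (r i) &
    forall m : 'I_n, (k <= m)%N -> s m = m.
Proof.
pose f (m : 'I_n) : 'I_n :=
  if insub (val m) is Some i then widen_ord le_kn (r i) else m.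
have f_low (i : 'I_k) : f (widen_ord le_kn i) = widen_ord le_kn (r i).
  by rewrite /f /= valK.
have f_high (m : 'I_n) : (k <= m)%N -> f m = m.
  by move=> le_m; rewrite /f insubF // ltnNge le_m.
have f_inj : injective f.
  move=> m1 m2; rewrite /f.
  case: insubP => [i1 _ v1|lt1]; case: insubP => [i2 _ v2|lt2] //.
  - move/(congr1 val) => /= /val_inj /perm_inj eq_i.
    by apply: val_inj; rewrite -v1 -v2 eq_i.
  - by move=> eq_m; move: lt2; rewrite -eq_m /= ltn_ord.
  - by move=> eq_m; move: lt1; rewrite eq_m /= ltn_ord.
by exists (perm f_inj) => [i|m le_m]; rewrite permE ?f_low ?f_high.
Qed.

Section PermSumsFiniteField.
Variable F : finFieldType.

Definition perm_sums n (b x : nat -> F) : {set F} :=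
  [set \sum_(k < n) b (s k) * x k | s : 'S_n].

Lemma perm_sums_geom_mulr n (b : nat -> F) (u z y : F) : z ^+ n = 1 ->
  y \in perm_sums n b (fun k => u * z ^+ k) ->
  y * z \in perm_sums n b (fun k => u * z ^+ k).
Proof.
move=> zn /imsetP[s _ ->]; apply/imsetP.
exists (perm (@ord_pred_inj n) * s)%g; first by rewrite inE.
rewrite mulr_suml [RHS](reindex_inj (@ordS_inj n)) /=; apply: eq_bigr => k _.
by rewrite permM permE ordSK -!mulrA -exprSr /= (expr_mod _ zn).
Qed.

Lemma card_prim_root_stable (A : {set F}) n (z : F) : n.-primitive_root z ->
  (forall y, y \in A -> y * z \in A) -> (n.+2 <= #|A|)%N -> (n.*2 <= #|A|)%N.
Proof.
move=> pz zA le_A; have zn := prim_expr_order pz.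
pose O x := [set x * z ^+ i | i : 'I_n].
have card_O x : x != 0 -> #|O x| = n.
  move=> x0; rewrite card_imset ?card_ord // => i j /(mulfI x0) /eqP.
  by rewrite (eq_prim_root_expr pz) !modn_small // => /eqP /val_inj.
have O_sub x : x \in A -> O x \subset A.
  move=> xA; apply/subsetP => _ /imsetP[i _ ->]; elim: (val i) => [|m IH].
    by rewrite mulr1.
  by rewrite exprSr mulrA zA.
have /set0Pn[x /setD1P[x0 xA]] : A :\ 0 != set0.
  apply: contraTneq le_A => /eqP; rewrite setD_eq0 => /subset_leq_card.
  by rewrite cards1 => le_A1; rewrite -leqNgt (leq_trans le_A1).
have /set0Pn[y /setDP[yA]] : A :\: (0 |: O x) != set0.
  apply: contraTneq le_A => /eqP; rewrite setD_eq0 => /subset_leq_card.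
  rewrite cardsU1 card_O // => le_A1; rewrite -leqNgt (leq_trans le_A1) //.
  by case: (0 \notin O x).
rewrite in_setU1 negb_or => /andP[y0 yO].
have disj : O x :&: O y = set0.
  apply/setP => w; rewrite !inE; apply/negbTE/andP => -[/imsetP[i _ ->] /imsetP[j _ eq_y]].
  apply: (negP yO); apply/imsetP.
  exists (Ordinal (ltn_pmod (i + (n - j)) (prim_order_gt0 pz))) => //=.
  rewrite (prim_expr_mod pz) exprD mulrA eq_y -mulrA -exprD subnKC ?zn ?mulr1 //.
  exact: ltnW.
have: O x :|: O y \subset A by rewrite subUset !O_sub.
by move/subset_leq_card; rewrite cardsU disj cards0 subn0 !card_O // addnn.
Qed.

(* Only a prefix of length k is permuted, with n < P_k <= 2 n so that P_k! is
   still nonzero. *)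
Lemma card_perm_sums_gt n (b : nat -> F) (u z : F) :
  n.-primitive_root z -> u != 0 ->
  (forall m, (m <= n.*2)%N -> (m`!)%:R != 0 :> F) ->
  (n.+1 <= distinct_pairs b n)%N ->
  (n.+2 <= #|perm_sums n b (fun k => (u * z ^+ k)%R)|)%N.
Proof.
move=> pz u0 fact_neq0 le_n.
have [k le_kn /andP[lt_k le_k2]] := distinct_pairs_window le_n.
pose x i := u * z ^+ i.
pose T := \sum_(m < n | ~~ (m < k)%N) b m * x m.
have x_inj i j : (i < k)%N -> (j < k)%N -> x i = x j -> i = j.
  move=> ik jk /(mulfI u0) /eqP; rewrite (eq_prim_root_expr pz) !modn_small => [/eqP //||];
  exact: leq_trans le_kn.
have sums_in (r : 'S_k) : T + \sum_(i < k) b i * x (r i) \in enum (perm_sums n b x).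
  have [s s_low s_high] := perm_extend le_kn (r^-1)%g.
  rewrite mem_enum; apply/imsetP; exists s => //.
  rewrite (bigID (fun m : 'I_n => (m < k)%N)) /= addrC; congr (_ + _).
    by apply: eq_bigr => m; rewrite -leqNgt => /s_high ->.
  rewrite (big_ord_narrow le_kn) [LHS](reindex_inj (@perm_inj _ r^-1)) /=.
  by apply: eq_bigr => i _; rewrite s_low permKV.
have fact_k m : (m <= maxn k (distinct_pairs b k))%N -> (m`!)%:R != 0 :> F.
  move=> le_m; apply: fact_neq0; apply: leq_trans le_m _.
  by rewrite geq_max le_k2 (leq_trans le_kn) // -addnn leq_addr.
by rewrite cardE; apply: leq_ltn_trans lt_k (size_perm_sums_gt x_inj fact_k sums_in).
Qed.

Lemma generator_prim_root (s : F) :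
  s != 0 -> (forall x, x != 0 -> exists k, x = s ^+ k) ->
  #|F|.-1.-primitive_root s.
Proof.
move=> s0 s_gen.
have card_units : #|[set~ (0 : F)]| = #|F|.-1 by rewrite cardsC1.
have N_gt0 : (0 < #|F|.-1)%N.
  by rewrite -card_units card_gt0; apply/set0Pn; exists 1; rewrite !inE oner_neq0.
have sN : s ^+ #|F|.-1 = 1.
  by apply: (mulIf s0); rewrite mul1r -exprSr prednK ?expf_card //; case: #|F| N_gt0.
have [m pm dvd_m] := prim_order_exists N_gt0 sN.
suff -> : #|F|.-1 = m by [].
apply/eqP; rewrite eqn_leq (dvdn_leq N_gt0 dvd_m) andbT -card_units.
have -> : [set~ (0 : F)] = [set s ^+ i | i : 'I_m].
  apply/setP => x; rewrite !inE; apply/idP/imsetP => [/s_gen[k ->]|[i _ ->]].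
    by exists (Ordinal (ltn_pmod k (prim_order_gt0 pm))); rewrite //= (prim_expr_mod pm).
  by rewrite expf_neq0.
by rewrite (leq_trans (leq_imset_card _ _)) // card_ord.
Qed.

End PermSumsFiniteField.

Lemma Fp_fact_neq0 q m : prime q -> (m < q)%N -> (m`!)%:R != 0 :> 'F_q.
Proof.
move=> qP; rewrite -(dvdn_pcharf (pchar_Fp qP)).
elim: m => [|m IH] lt_m; first by rewrite dvdn1 gtn_eqF ?prime_gt1.
rewrite factS (Euclid_dvdM _ _ qP) negb_or (IH (ltnW lt_m)) andbT.
by rewrite gtnNdvd.
Qed.

Lemma class_nonconstant_parity q (a : nat -> 'F_q) (e : nat) (p : bool) :
  (q %% 4 = 1)%N -> (e < 2)%N -> class_nonconstant a (2 * p + e) ->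
  exists j1 j2, [/\ (j1 < q.-1./2)%N, (j2 < q.-1./2)%N, (j1 %% 2 = p)%N, (j2 %% 2 = p)%N
                  & a (2 * j1 + e)%N != a (2 * j2 + e)%N].
Proof.
move=> q4 e2 [i [j [iq jq ir jr aij]]].
have half k : (k < q.-1)%N -> (k %% 4 = 2 * p + e)%N ->
    [/\ (k %/ 2 < q.-1./2)%N, (k %/ 2 %% 2 = p)%N & (2 * (k %/ 2) + e = k)%N].
  by rewrite -divn2 => kq kr; case: p {ir jr} kr => /= kr; split; lia.
have [hi oi ei] := half i iq ir; have [hj oj ej] := half j jq jr.
by exists (i %/ 2)%N, (j %/ 2)%N; rewrite ei ej.
Qed.

Lemma card_perm_sums_Fp q (s u : 'F_q) (b : nat -> 'F_q) :
  prime q -> (q %% 4 = 1)%N -> (13 <= q)%N -> q.-1.-primitive_root s -> u != 0 ->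
  (forall p : bool, exists j1 j2, [/\ (j1 < q.-1./2)%N, (j2 < q.-1./2)%N,
      (j1 %% 2 = p)%N, (j2 %% 2 = p)%N & b j1 != b j2]) ->
  (q.-1 <= #|perm_sums q.-1./2 b (fun k => (u * (s ^+ 2) ^+ k)%R)|)%N.
Proof.
move=> qP q4 q13 ps u0 nonconst; set n := q.-1./2.
have qn : q.-1 = n.*2 by rewrite /n -divn2 -mul2n; lia.
have pz : n.-primitive_root (s ^+ 2).
  have n_gt0 : (0 < n)%N by rewrite /n -divn2; lia.
  have n_dvd : (n %| q.-1)%N by rewrite qn -muln2 dvdn_mulr.
  by have := dvdn_prim_root ps n_dvd; rewrite qn -muln2 mulKn.
rewrite qn; apply: (card_prim_root_stable pz).
  by move=> y; apply: perm_sums_geom_mulr; rewrite (prim_expr_order pz).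
apply: (card_perm_sums_gt pz u0).
  by move=> m le_m; apply: Fp_fact_neq0; lia.
apply: distinct_pairs_lower; [lia | exact: parity_two_others |].
by have [j1 [j2 [? ? _ _ ?]]] := nonconst false; exists j1, j2.
Qed.

Theorem corollary3 (q : nat) (s : 'F_q) (a : nat -> 'F_q) :
  prime q -> (q %% 4 = 1)%N -> (13 <= q)%N ->
  generator_units s ->
  (forall r : nat, (r < 4)%N -> class_nonconstant a r) ->
  (q.-1 <= #|A_even s a|)%N /\ (q.-1 <= #|A_odd s a|)%N.
Proof.
move=> qP q4 q13 [s0 s_gen] nonconst.
have ps : q.-1.-primitive_root s by have := generator_prim_root s0 s_gen; rewrite card_Fp.
have parity e (p : bool) : (e < 2)%N -> exists j1 j2, [/\ (j1 < q.-1./2)%N, (j2 < q.-1./2)%N,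
    (j1 %% 2 = p)%N, (j2 %% 2 = p)%N & a (2 * j1 + e)%N != a (2 * j2 + e)%N].
  by move=> e2; apply: class_nonconstant_parity => //; apply: nonconst; case: p; lia.
split.
- have -> : A_even s a =
      perm_sums q.-1./2 (fun j => a (2 * j + 0)%N) (fun k => (1 * (s ^+ 2) ^+ k)%R).
    by apply: eq_imset => r; apply: eq_bigr => k _; rewrite addn0 mul1r exprM.
  exact: card_perm_sums_Fp qP q4 q13 ps (oner_neq0 _) (fun p => parity 0%N p isT).
- have -> : A_odd s a =
      perm_sums q.-1./2 (fun j => a (2 * j + 1)%N) (fun k => (s * (s ^+ 2) ^+ k)%R).
    by apply: eq_imset => r; apply: eq_bigr => k _; rewrite addn1 exprS exprM.
  exact: card_perm_sums_Fp qP q4 q13 ps s0 (fun p => parity 1%N p isT).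
Qed.
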